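(* Fix a dataset $\mathbb D_N$ and a point $x\in\mathcal X$. If the GP-CBF-SOCP is feasible at $x$, then the symmetric matrix $$H(x|\mathbb D_N)=\begin{bmatrix}H_{11}&H_{1u}\\ H_{1u}^T&H_{uu}\end{bmatrix}$$ is not positive definite, where - $H_{11}=\beta^2\Sigma_{L_fB}-(\widehat{L_fB}+\gamma(B(x)))^2$, - $H_{1u}=\beta^2(\Sigma_{L_fB}^{1/2})^T\Sigma_{L_gB}^{1/2}-(\widehat{L_fB}+\gamma(B(x)))\widehat{L_gB}$, - $H_{uu}=\beta^2\Sigma_{L_gB}-\widehat{L_gB}^T\widehat{L_gB}$, with all quantities evaluated at $(x|\mathbb D_N)$.
   Context: Consider $\dot x=f(x)+g(x)u$ with $x\in\mathcal X\subset\mathbb R^n$ and $u\in\mathbb R^m$, where $f,g$ are locally Lipschitz and unknown. A nominal model $\tilde f,\tilde g$ is available. Let $B:\mathcal X\to\mathbb R$ be $C^1$, let $\gamma$ be extended class-$\mathcal K_\infty$, and let $u_{\text{ref}}$ be a reference controller. Lie derivatives: $L_{\tilde f}B=\nabla B\,\tilde f$ and $L_{\tilde g}B=\nabla B\,\tilde g\in\mathbb R^{1\times m}$; $L_fB$ and $L_gB$ are defined similarly. Set $\Delta_B(x,u)=(L_fB-L_{\tilde f}B)(x)+(L_gB-L_{\tilde g}B)(x)u$. A dataset $\mathbb D_N=\{((x_j,u_j),z_j)\}$ consists of $z_j=\Delta_B(x_j,u_j)+\epsilon_j$. GP model with the affine dot product kernel $k_c((x,y),(x',y'))=y^T\mathrm{diag}(k_1(x,x'),\dots,k_{m+1}(x,x'))y'$: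 - Let $y_j=[1,u_j^T]^T$, $\mathbf z=(z_j)$, let $\sigma_n>0$, and let $K_c$ be the Gram matrix on the data. - Let $K_{**}(x)=\mathrm{diag}(k_i(x,x))$, and let $K_{*Y}(x)$ have entries $k_i(x,x_j)(y_j)_i$. - Define $m_B(x|\mathbb D_N)=K_{*Y}(K_c+\sigma_n^2I)^{-1}\mathbf z$ and $\Sigma_B(x|\mathbb D_N)=K_{**}-K_{*Y}(K_c+\sigma_n^2I)^{-1}K_{*Y}^T$, which is positive definite. - The posterior mean and standard deviation are $\mu_B=m_B^T[1;u]$ and $\sigma_B=\sqrt{[1,u^T]\Sigma_B[1;u]}$. $\beta>0$ is a constant. Derived quantities: - $\widehat{L_fB}=L_{\tilde f}B+(m_B)_1$ and $\widehat{L_gB}=L_{\tilde g}B+((m_B)_2,\dots,(m_B)_{m+1})$. - $\Sigma_B^{1/2}$ is the symmetric positive definite square root of $\Sigma_B$. - $\Sigma_{L_fB}^{1/2}$ is its first column and $\Sigma_{L_gB}^{1/2}$ its remaining $m$ columns. - $\Sigma_{L_fB}=(\Sigma_{L_fB}^{1/2})^T\Sigma_{L_fB}^{1/2}\in\mathbb R$ and $\Sigma_{L_gB}=(\Sigma_{L_gB}^{1/2})^T\Sigma_{L_gB}^{1/2}\in\mathbb R^{m\times m}$. The GP-CBF-SOCP at $x$ is: minimize $\|u-u_{\text{ref}}(x)\|^2$ subject to $L_{\tilde f}B(x)+L_{\tilde g}B(x)u+\mu_B(x,u|\mathbb D_N)-\beta\sigma_B(x,u|\mathbb D_N)+\gamma(B(x))\ge0$.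 It is feasible at $x$ if some $u$ satisfies the constraint. *)

From HB Require Import structures.
From mathcomp Require Import all_boot all_order all_algebra.
From mathcomp Require Import all_classical all_reals all_analysis.
Set Implicit Arguments. Unset Strict Implicit. Unset Printing Implicit Defensive.
Import Order.TTheory GRing.Theory Num.Theory.
Import numFieldNormedType.Exports.
Local Open Scope classical_set_scope.
Local Open Scope ring_scope.

Section GPCBF.
Variable R : realType.

Definition posdef (p : nat) (A : 'M[R]_p) : Prop :=
  A^T = A /\ forall v : 'cV[R]_p, v != 0 -> 0 < (v^T *m A *m v) 0 0.

Definition ext_class_Kinf (g : R -> R) : Prop :=
  continuous g /\ (forall a b, a < b -> g a < g b) /\ g 0 = 0 /\
  (g x @[x --> +oo%R] --> +oo%R) /\ (g x @[x --> -oo%R] --> -oo%R).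

Definition is_C1_gradient (n : nat) (B : 'rV[R]_n -> R) (gradB : 'rV[R]_n -> 'rV[R]_n) : Prop :=
  continuous gradB /\
  forall (x v : 'rV[R]_n), is_derive x v B (\sum_i gradB x 0 i * v 0 i).

Definition LieB_f (n : nat) (gradB : 'rV[R]_n -> 'rV[R]_n) (ft : 'rV[R]_n -> 'cV[R]_n)
  (x : 'rV[R]_n) : R := (gradB x *m ft x) 0 0.
Definition LieB_g (n m : nat) (gradB : 'rV[R]_n -> 'rV[R]_n) (gt : 'rV[R]_n -> 'M[R]_(n, m))
  (x : 'rV[R]_n) : 'rV[R]_m := gradB x *m gt x.

(* GP with affine dot-product kernel: k i, i : 'I_(1+m), data (xs j, us j, z j) *)
Definition yvec (m : nat) (u : 'cV[R]_m) : 'cV[R]_(1 + m) := col_mx 1 u.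

Definition Kc (n m N : nat) (k : 'I_(1 + m) -> 'rV[R]_n -> 'rV[R]_n -> R)
  (xs : 'I_N -> 'rV[R]_n) (us : 'I_N -> 'cV[R]_m) : 'M[R]_N :=
  \matrix_(j, l) \sum_i (yvec (us j)) i 0 * k i (xs j) (xs l) * (yvec (us l)) i 0.

Definition KsY (n m N : nat) (k : 'I_(1 + m) -> 'rV[R]_n -> 'rV[R]_n -> R)
  (xs : 'I_N -> 'rV[R]_n) (us : 'I_N -> 'cV[R]_m) (x : 'rV[R]_n) : 'M[R]_(1 + m, N) :=
  \matrix_(i, j) (k i x (xs j) * (yvec (us j)) i 0).

Definition Kss (n m : nat) (k : 'I_(1 + m) -> 'rV[R]_n -> 'rV[R]_n -> R)
  (x : 'rV[R]_n) : 'M[R]_(1 + m) := diag_mx (\row_i k i x x).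

Definition mB (n m N : nat) k xs us (z : 'cV[R]_N) (sn : R) (x : 'rV[R]_n) : 'cV[R]_(1 + m) :=
  @KsY n m N k xs us x *m invmx (Kc k xs us + (sn ^+ 2) %:M) *m z.

Definition SigmaB (n m N : nat) k xs us (sn : R) (x : 'rV[R]_n) : 'M[R]_(1 + m) :=
  @Kss n m k x - @KsY n m N k xs us x *m invmx (Kc k xs us + (sn ^+ 2) %:M)
                  *m (KsY k xs us x)^T.

Definition muB (n m N : nat) k xs us z sn (x : 'rV[R]_n) (u : 'cV[R]_m) : R :=
  ((@mB n m N k xs us z sn x)^T *m yvec u) 0 0.

Definition sigmaB (n m N : nat) k xs us sn (x : 'rV[R]_n) (u : 'cV[R]_m) : R :=
  Num.sqrt (((yvec u)^T *m @SigmaB n m N k xs us sn x *m yvec u) 0 0).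

(* feasibility of the GP-CBF-SOCP at x (the objective plays no role) *)
Definition socp_feasible (n m N : nat) (B : 'rV[R]_n -> R) gradB ft (gt : 'rV[R]_n -> 'M[R]_(n, m))
  (gam : R -> R) (beta : R) k xs us z sn (x : 'rV[R]_n) : Prop :=
  exists u : 'cV[R]_m,
    0 <= LieB_f gradB ft x + (LieB_g gradB gt x *m u) 0 0
         + @muB n m N k xs us z sn x u - beta * @sigmaB n m N k xs us sn x u
         + gam (B x).

(* the matrix H(x | D_N), given the symmetric PD square root S of Sigma_B(x | D_N) *)
Definition Hmat (n m N : nat) (B : 'rV[R]_n -> R) gradB ft (gt : 'rV[R]_n -> 'M[R]_(n, m))
  (gam : R -> R) (beta : R) k xs us z sn (x : 'rV[R]_n) (S : 'M[R]_(1 + m)) : 'M[R]_(1 + m) :=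
  let mb := @mB n m N k xs us z sn x in
  let hLf := LieB_f gradB ft x + mb 0 0 in
  let hLg := LieB_g gradB gt x + (dsubmx mb)^T in
  let Sf := lsubmx S in
  let Sg := rsubmx S in
  let SigLf := ((Sf^T *m Sf) 0 0) in
  let SigLg := Sg^T *m Sg in
  let c := hLf + gam (B x) in
  let H11 := beta ^+ 2 * SigLf - c ^+ 2 in
  let H1u := beta ^+ 2 *: (Sf^T *m Sg) - c *: hLg in
  let Huu := beta ^+ 2 *: SigLg - hLg^T *m hLg in
  block_mx (H11%:M : 'M[R]_1) H1u H1u^T Huu.

End GPCBF.

(* Since S is symmetric with S^2 = Sigma_B, the block matrix H is
   beta^2 Sigma_B - a a^T with a = [hat(L_fB) + gamma(B x); hat(L_gB)^T].  For y = [1; u],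
   a^T y is the left-hand side of the SOCP constraint without the term
   -beta sigma_B, so feasibility of u gives a^T y >= beta sqrt(y^T Sigma_B y) >= 0,
   whence y^T H y = beta^2 y^T Sigma_B y - (a^T y)^2 <= 0 with y <> 0. *)

From HB Require Import structures.
From mathcomp Require Import all_boot all_order all_algebra.
From mathcomp Require Import all_classical all_reals all_analysis.
From mathcomp Require Import lra.

Set Implicit Arguments.
Unset Strict Implicit.
Unset Printing Implicit Defensive.
Import Order.TTheory GRing.Theory Num.Theory.
Local Open Scope ring_scope.

Lemma block_gram_sub_rank1 (R : comRingType) (m : nat) (S : 'M[R]_(1 + m))
    (b c : R) (h : 'rV[R]_m) :
  let a := col_mx (c%:M : 'M[R]_1) h^T in
  block_mx ((b * ((lsubmx S)^T *m lsubmx S) 0 0 - c ^+ 2)%:M : 'M[R]_1)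
    (b *: ((lsubmx S)^T *m rsubmx S) - c *: h)
    (b *: ((lsubmx S)^T *m rsubmx S) - c *: h)^T
    (b *: ((rsubmx S)^T *m rsubmx S) - h^T *m h)
  = b *: (S^T *m S) - a *m a^T.
Proof.
have -> : S^T *m S = (row_mx (lsubmx S) (rsubmx S))^T *m row_mx (lsubmx S) (rsubmx S).
  by rewrite hsubmxK.
rewrite /= tr_row_mx !mul_col_row tr_col_mx tr_scalar_mx trmxK.
rewrite mul_col_row scale_block_mx opp_block_mx add_block_mx.
congr block_mx.
- by apply/matrixP => i j; rewrite !ord1 !mxE /= !mulr1n big_ord1 !mxE /= !mulr1n expr2.
- by rewrite mul_scalar_mx.
- by rewrite linearD /= linearZ /= linearN /= linearZ /= trmx_mul mul_mx_scalar trmxK.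
Qed.

Lemma quad_form_scale_sub_rank1 (R : comRingType) (p : nat) (M : 'M[R]_p)
    (a y : 'cV[R]_p) (b : R) :
  (y^T *m (b *: M - a *m a^T) *m y) 0 0 = b * (y^T *m M *m y) 0 0 - (a^T *m y) 0 0 ^+ 2.
Proof.
rewrite mulmxBr mulmxBl -scalemxAr -scalemxAl !mulmxA -(mulmxA (y^T *m a)).
rewrite -[y^T *m a]trmxK trmx_mul trmxK [(a^T *m y)]mx11_scalar tr_scalar_mx mul_scalar_mx.
by rewrite !mxE mulr1n expr2.
Qed.

Lemma not_posdef_scale_sub_rank1 (R : realType) (p : nat) (M : 'M[R]_p)
    (a y : 'cV[R]_p) (beta : R) :
  y != 0 -> 0 <= beta -> 0 <= (y^T *m M *m y) 0 0 ->
  beta * Num.sqrt ((y^T *m M *m y) 0 0) <= (a^T *m y) 0 0 ->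
  ~ posdef (beta ^+ 2 *: M - a *m a^T).
Proof.
move=> y_neq0 beta_ge0 q_ge0 le_sqrt_t [_ /(_ y y_neq0)].
rewrite quad_form_scale_sub_rank1 subr_gt0 -(sqr_sqrtr q_ge0) -exprMn ltNge.
have s_ge0 : 0 <= beta * Num.sqrt ((y^T *m M *m y) 0 0) by rewrite mulr_ge0 ?sqrtr_ge0.
by move/negP; apply; rewrite ler_pXn2r ?nnegrE // (le_trans s_ge0).
Qed.

Lemma yvec_neq0 (R : realType) (m : nat) (u : 'cV[R]_m) : yvec u != 0.
Proof.
apply/negP => /eqP/matrixP/(_ (lshift m 0) 0).
by rewrite /yvec col_mxEu !mxE /=; apply/eqP/oner_neq0.
Qed.

Lemma tr_mul_yvec (R : realType) (m : nat) (v : 'cV[R]_(1 + m)) (u : 'cV[R]_m) :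
  (v^T *m yvec u) 0 0 = v 0 0 + ((dsubmx v)^T *m u) 0 0.
Proof.
rewrite -[in LHS](vsubmxK v) tr_col_mx /yvec mul_row_col mulmx1 !mxE.
by congr (v _ _ + _); apply: val_inj.
Qed.

Lemma tr_col_scalar_mul_yvec (R : realType) (m : nat) (c : R) (h : 'rV[R]_m)
    (u : 'cV[R]_m) :
  ((col_mx (c%:M : 'M[R]_1) h^T)^T *m yvec u) 0 0 = c + (h *m u) 0 0.
Proof. by rewrite tr_col_mx trmxK tr_scalar_mx /yvec mul_row_col mulmx1 !mxE. Qed.

Theorem lemma8 (R : realType) (n m N : nat) (X : set 'rV[R]_n)
  (B : 'rV[R]_n -> R) (gradB : 'rV[R]_n -> 'rV[R]_n)
  (ft : 'rV[R]_n -> 'cV[R]_n) (gt : 'rV[R]_n -> 'M[R]_(n, m))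
  (gam : R -> R) (beta : R)
  (k : 'I_(1 + m) -> 'rV[R]_n -> 'rV[R]_n -> R)
  (xs : 'I_N -> 'rV[R]_n) (us : 'I_N -> 'cV[R]_m) (z : 'cV[R]_N) (sn : R)
  (x : 'rV[R]_n) (S : 'M[R]_(1 + m)) :
  is_C1_gradient B gradB ->
  ext_class_Kinf gam ->
  0 < beta ->
  0 < sn ->
  (forall j, xs j \in X) ->
  x \in X ->
  posdef (SigmaB k xs us sn x) ->
  posdef S -> S *m S = SigmaB k xs us sn x ->
  socp_feasible B gradB ft gt gam beta k xs us z sn x ->
  ~ posdef (Hmat B gradB ft gt gam beta k xs us z sn x S).
Proof.
move=> _ _ beta_gt0 _ _ _ [_ Sigma_pd] [S_sym _] S2 [u feasible].
have q_gt0 := Sigma_pd _ (yvec_neq0 u).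
rewrite /Hmat /= block_gram_sub_rank1 S_sym S2.
apply: not_posdef_scale_sub_rank1 (yvec_neq0 u) (ltW beta_gt0) (ltW q_gt0) _.
rewrite /muB /sigmaB tr_mul_yvec in feasible.
move: (mB _ _ _ _ _ _) feasible => mb feasible.
by rewrite tr_col_scalar_mul_yvec mulmxDl [in X in _ <= X]mxE; lra.
Qed.
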